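(* Let $n\ge 1$. Let $H_1$ be the graph obtained from the complete bipartite graph $K_{n,n}$ with left vertices $l_1,\dots,l_n$ and right vertices $r_1,\dots,r_n$ by adding two new vertices $s$ (source) and $t$ (sink), joining each $l_j$ to $s$ by $n$ internally vertex-disjoint paths of length $n$ (with new internal vertices), and joining each $r_j$ to $t$ by $n$ internally vertex-disjoint paths of length $n$ (with new internal vertices). For $i\ge 2$, let $H_i$ be the graph obtained from $H_1$ by replacing every edge $(a,b)$ of $H_1$ by a fresh copy of $H_{i-1}$ whose source and sink are identified with $a$ and $b$; the source and sink of $H_i$ are $s$ and $t$. Then for every $i\ge 1$, $H_i$ has treewidth at most $n+1$.
   Context: Treewidth: a tree decomposition of $G=(V_G,E_G)$ is a tree $T$ with bags $X_i\subseteq V_G$ ($i\in V(T)$) such that the bags cover $V_G$, every edge has both endpoints in some bag, and for $i,j,k\in V(T)$ with $j$ on the $i$–$k$ path, $X_i\cap X_k\subseteq X_j$. Its width is $\max_i|X_i|-1$; the treewidth of $G$ is the minimum width over its tree decompositions. *)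

From mathcomp Require Import all_boot.
Set Implicit Arguments. Unset Strict Implicit. Unset Printing Implicit Defensive.

(* A tree: a finite, nonempty, simple (symmetric, irreflexive), connected graph
   with exactly #|T| - 1 edges (each edge counted twice as an ordered pair). *)
Definition is_tree (T : finType) (e : rel T) : Prop :=
  [/\ 0 < #|T|, symmetric e, irreflexive e,
      (forall x y, connect e x y) &
      #|[set p : T * T | e p.1 p.2]| = 2 * (#|T| - 1)].

(* j lies on the (unique) i--k path of the tree: every walk from i to k visits j. *)
Definition on_tree_path (T : finType) (e : rel T) (i j k : T) : Prop :=
  forall p : seq T, path e i p -> last i p = k -> j \in i :: p.

Definition tree_decomposition (V : finType) (g : rel V)
    (T : finType) (e : rel T) (X : T -> {set V}) : Prop :=
  [/\ is_tree e,
      (forall v : V, exists i : T, v \in X i),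
      (forall u v : V, g u v -> exists i : T, (u \in X i) && (v \in X i)) &
      (forall i j k : T, on_tree_path e i j k -> X i :&: X k \subset X j)].

Definition decomp_width (V T : finType) (X : T -> {set V}) : nat :=
  (\max_(i : T) #|X i|) - 1.

Definition treewidth_le (V : finType) (g : rel V) (k : nat) : Prop :=
  exists (T : finType) (e : rel T) (X : T -> {set V}),
    tree_decomposition g e X /\ decomp_width X <= k.

Record tgraph := TGraph {
  vert : finType;
  arc : rel vert;
  src : vert;
  snk : vert }.

Definition adj (G : tgraph) : rel (vert G) := fun u v => arc u v || arc v u.

(* internal path vertex: (j, q, m) = vertex at position m (1 <= m <= n-1)
   on the q-th path attached to l_j (resp. r_j) *)
Definition innerT (n : nat) : finType :=
  {x : 'I_n * 'I_n * 'I_n | 0 < nat_of_ord x.2}.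

(* inl (inl true) = s, inl (inl false) = t,
   inl (inr (j, true)) = l_j, inl (inr (j, false)) = r_j,
   inr (x, true) = internal vertex of a left (s--l) path,
   inr (x, false) = internal vertex of a right (r--t) path *)
Definition V1 (n : nat) : finType :=
  ((bool + ('I_n * bool)) + (innerT n * bool))%type.

Definition vs n : V1 n := inl (inl true).
Definition vt n : V1 n := inl (inl false).
Definition vl n (j : 'I_n) : V1 n := inl (inr (j, true)).
Definition vr n (j : 'I_n) : V1 n := inl (inr (j, false)).

(* onP b j q m v: v is the vertex at position m (0..n) of the q-th path of
   side b at index j.  Left paths (b = true) go s (pos 0) -> l_j (pos n);
   right paths (b = false) go r_j (pos 0) -> t (pos n). *)
Definition onP n (b : bool) (j q : 'I_n) (m : nat) (v : V1 n) : bool :=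
  if m == 0 then v == (if b then vs n else vr j)
  else if m == n then v == (if b then vl j else vt n)
  else match v with
       | inr (x, b') => [&& b' == b, (val x).1.1 == j, (val x).1.2 == q
                          & nat_of_ord (val x).2 == m]
       | _ => false
       end.

Definition arc1 n : rel (V1 n) := fun u v =>
  [exists j : 'I_n, exists q : 'I_n, exists m : 'I_n,
      [|| onP true j q m u && onP true j q m.+1 v
        | onP false j q m u && onP false j q m.+1 v]]
  || [exists j : 'I_n, exists k : 'I_n, (u == vl j) && (v == vr k)].

Definition H1 (n : nat) : tgraph := @TGraph (V1 n) (@arc1 n) (vs n) (vt n).

Section Subst.
Variables G F : tgraph.

Definition arcsT : finType := {p : vert G * vert G | arc p.1 p.2}.
Definition innerF : finType := {x : vert F | (x != src F) && (x != snk F)}.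
Definition substV : finType := (vert G + (arcsT * innerF))%type.

(* image of vertex x of the copy of F placed on arc e = (a, b):
   src F |-> a, snk F |-> b, internal vertices are fresh *)
Definition emb (e : arcsT) (x : vert F) : substV :=
  match (insub x : option innerF) with
  | Some y => inr (e, y)
  | None => if x == src F then inl (val e).1 else inl (val e).2
  end.

Definition subst_arc : rel substV := fun w1 w2 =>
  [exists e : arcsT, exists x1 : vert F, exists x2 : vert F,
     [&& arc x1 x2, emb e x1 == w1 & emb e x2 == w2]].

Definition subst : tgraph := @TGraph substV subst_arc (inl (src G)) (inl (snk G)).
End Subst.

(* Hgr n k = H_{k+1} *)
Fixpoint Hgr (n k : nat) : tgraph :=
  match k with
  | 0 => H1 n
  | k'.+1 => subst (H1 n) (Hgr n k')
  end.

Definition H (n i : nat) : tgraph := Hgr n i.-1.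

From mathcomp Require Import all_boot.
Set Implicit Arguments. Unset Strict Implicit. Unset Printing Implicit Defensive.

(* We prove the stronger invariant that H_i has a tree decomposition of width
   n + 1 whose root bag contains both terminals.  For H_1, the root bag is
   {s, t, l_1, ..., l_n}; below it hang one bag {t, r_j, l_1, ..., l_n} per j
   and one bag per s--l_j path, and below {t, r_j, l_1, ..., l_n} one bag per
   r_j--t path.  The invariant survives substitution: the decomposition of the
   copy of H_{i-1} placed on an arc (a, b) is hung below some bag containing
   both a and b, the images of the terminals in its root bag.

   Decompositions are given by a parent function; the bags containing a vertex
   form a subtree exactly when only one of them is topmost, i.e. is the root or
   has a parent bag not containing the vertex. *)

Section ParentTree.
Variables (V T : finType) (par : T -> T) (r : T) (d : T -> nat).
Hypothesis par_root : par r = r.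
Hypothesis depth_par : forall x, x != r -> d (par x) < d x.

Lemma parent_ind (P : T -> Prop) :
  P r -> (forall x, x != r -> P (par x) -> P x) -> forall x, P x.
Proof.
move=> Pr IH x; elim: {x}(d x) {-2}x (leqnn (d x)) => [|m IHm] x dx;
  case: (eqVneq x r) => [-> //|xr]; apply: (IH _ xr).
  by have := depth_par xr; rewrite ltnNge (leq_trans dx).
by apply: IHm; rewrite -ltnS (leq_trans (depth_par xr)).
Qed.

Lemma par_neq x : x != r -> par x != x.
Proof. by move=> /depth_par lt; apply: contraTneq lt => ->; rewrite ltnn. Qed.

Definition parent_rel : rel T := fun x y => (x != y) && ((par x == y) || (par y == x)).

Lemma parent_rel_sym : symmetric parent_rel.
Proof. by move=> x y; rewrite /parent_rel eq_sym orbC. Qed.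

Lemma parent_rel_par x : x != r -> parent_rel x (par x).
Proof. by move=> xr; rewrite /parent_rel eqxx eq_sym par_neq. Qed.

Lemma connect_root x : connect parent_rel x r.
Proof.
elim/parent_ind: x => // x xr; apply: connect_trans; exact/connect1/parent_rel_par.
Qed.

Lemma is_tree_parent_rel : is_tree parent_rel.
Proof.
split.
- by apply/card_gt0P; exists r.
- exact: parent_rel_sym.
- by move=> x; rewrite /parent_rel eqxx.
- move=> x y; apply: connect_trans (connect_root x) _.
  by rewrite (sym_connect_sym parent_rel_sym); apply: connect_root.
pose up := [set (x, par x) | x in [set~ r]].
pose down := [set (par x, x) | x in [set~ r]].
have -> : [set p : T * T | parent_rel p.1 p.2] = up :|: down.
  apply/setP=> [[x y]]; rewrite !inE /parent_rel /=; apply/idP/idP.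
  - case/andP=> xy /orP[/eqP e|/eqP e]; subst; apply/orP; [left|right];
      apply: imset_f; rewrite !inE; apply: contra xy => /eqP->; by rewrite par_root.
  - by case/orP=> /imsetP[z]; rewrite !inE => zr [-> ->];
      rewrite eqxx ?orbT ?andbT ?par_neq // eq_sym par_neq.
have disjoint_up_down : up :&: down = set0.
  apply/setP=> [[x y]]; rewrite !inE; apply/negP=> /andP[/imsetP[z]].
  rewrite !inE => zr [-> ->] /imsetP[w]; rewrite !inE => wr [e1 e2].
  have := depth_par wr; rewrite -e1 -{1}e2 => /(ltn_trans (depth_par zr)).
  by rewrite ltnn.
rewrite cardsU disjoint_up_down cards0 subn0 !card_imset ?cardsC1;
  [by rewrite mul2n -addnn subn1 | by move=> a b [] | by move=> a b []].
Qed.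

Variable X : T -> {set V}.

Definition top_bag (v : V) (i : T) : bool :=
  (v \in X i) && ((i == r) || (v \notin X (par i))).

Lemma walk_to_top_bag v i : v \in X i -> exists p t,
  [/\ path parent_rel i p, last i p = t, top_bag v t & all (fun x => v \in X x) (i :: p)].
Proof.
elim/parent_ind: i => [vr|i ir IH vi].
  by exists [::], r; rewrite /top_bag /= vr eqxx.
have [ti|nti] := boolP (top_bag v i); first by exists [::], i; rewrite /= vi.
have [|p [t [pp pt tt pv]]] := IH; first by move: nti; rewrite /top_bag vi (negbTE ir) negbK.
by exists (par i :: p), t; rewrite /= parent_rel_par // vi.
Qed.

Hypothesis top_bag_unique : forall v i1 i2, top_bag v i1 -> top_bag v i2 -> i1 = i2.

Lemma walk_from_top_bag v t k : top_bag v t -> v \in X k -> exists p,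
  [/\ path parent_rel t p, last t p = k & all (fun x => v \in X x) (t :: p)].
Proof.
move=> tt; elim/parent_ind: k => [vr|k kr IH vk].
  by exists [::]; rewrite (top_bag_unique tt (_ : top_bag v r)) /= ?vr // /top_bag vr eqxx.
have [tk|ntk] := boolP (top_bag v k).
  by exists [::]; rewrite (top_bag_unique tt tk) /= vk.
have [|p [pp pk pv]] := IH; first by move: ntk; rewrite /top_bag vk (negbTE kr) negbK.
exists (rcons p k); rewrite rcons_path pp last_rcons pk parent_rel_sym parent_rel_par //.
by rewrite -rcons_cons all_rcons vk.
Qed.

Lemma tree_decomposition_parent_rel (g : rel V) :
  (forall v, exists i, v \in X i) ->
  (forall u v, g u v -> exists i, (u \in X i) && (v \in X i)) ->
  tree_decomposition g parent_rel X.
Proof.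
move=> cover_vertices cover_edges; split=> //; first exact: is_tree_parent_rel.
move=> i j k ijk; apply/subsetP=> v /setIP[vi vk].
have [p1 [t [p1p p1t tt p1v]]] := walk_to_top_bag vi.
have [p2 [p2p p2k p2v]] := walk_from_top_bag tt vk.
have := ijk (p1 ++ p2); rewrite cat_path p1p p1t p2p last_cat p1t p2k.
rewrite -cat_cons mem_cat => /(_ erefl erefl) /orP[/(allP p1v)//|jp2].
by apply: (allP p2v); rewrite inE jp2 orbT.
Qed.

End ParentTree.

Record rooted_decomposition (G : tgraph) (k : nat) := RootedDecomposition {
  rd_node : finType;
  rd_parent : rd_node -> rd_node;
  rd_root : rd_node;
  rd_depth : rd_node -> nat;
  rd_bag : rd_node -> {set vert G};
  rd_parent_root : rd_parent rd_root = rd_root;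
  rd_depth_parent : forall x, x != rd_root -> rd_depth (rd_parent x) < rd_depth x;
  rd_cover_vertices : forall v, exists i, v \in rd_bag i;
  rd_cover_arcs : forall u v, arc u v -> exists i, (u \in rd_bag i) && (v \in rd_bag i);
  rd_top_bag_unique : forall v i1 i2,
    top_bag rd_parent rd_root rd_bag v i1 ->
    top_bag rd_parent rd_root rd_bag v i2 -> i1 = i2;
  rd_terminals : (src G \in rd_bag rd_root) && (snk G \in rd_bag rd_root);
  rd_bag_size : forall i, #|rd_bag i| <= k }.
Arguments rd_parent {G k} r _.
Arguments rd_depth {G k} r _.
Arguments rd_bag {G k} r _.

Lemma treewidth_le_rooted G k : rooted_decomposition G k.+1 -> treewidth_le (@adj G) k.
Proof.
case=> T par r d X par_root depth_par cover_vertices cover_arcs top_unique _ bag_size.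
exists T, (parent_rel par), X; split.
  apply: (tree_decomposition_parent_rel par_root depth_par top_unique cover_vertices).
  by move=> u v /orP[/cover_arcs // | /cover_arcs [i]]; exists i; rewrite andbC.
by rewrite /decomp_width leq_subLR add1n; apply/bigmax_leqP.
Qed.

Lemma root_bag_parent G k (D : rooted_decomposition G k) v i :
  i != rd_root D -> v \in rd_bag D (rd_root D) -> v \in rd_bag D i ->
  v \in rd_bag D (rd_parent D i).
Proof.
move=> ir vr vi; apply: contraTT ir => vpi; apply/negPn/eqP.
by apply: (@rd_top_bag_unique _ _ D v); rewrite /top_bag ?vr ?vi ?eqxx ?vpi ?orbT.
Qed.

Notation rd_top_bag D := (top_bag (rd_parent D) (rd_root D) (rd_bag D)).

Section Substitution.
Variables (G F : tgraph) (k : nat).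

Lemma emb_cases (e : arcsT G) (x : vert F) :
  [\/ x = src F /\ emb e x = inl (val e).1, x = snk F /\ emb e x = inl (val e).2
    | exists2 z : innerF F, x = val z & emb e x = inr (e, z)].
Proof.
rewrite /emb; case: insubP => [z _ <-|]; first by constructor 3; exists z.
rewrite negb_and !negbK => /orP[/eqP->|/eqP->]; first by constructor 1; rewrite eqxx.
by case: (eqVneq (snk F) (src F)) => [?|_]; [constructor 1 | constructor 2].
Qed.

Lemma emb_val (e : arcsT G) (z : innerF F) : emb e (val z) = inr (e, z).
Proof. by rewrite /emb valK. Qed.

Variables (DG : rooted_decomposition G k) (DF : rooted_decomposition F k).

Definition arc_node (e : arcsT G) : rd_node DG :=
  odflt (rd_root DG) [pick i | ((val e).1 \in rd_bag DG i) && ((val e).2 \in rd_bag DG i)].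

Lemma arc_node_bag e :
  ((val e).1 \in rd_bag DG (arc_node e)) && ((val e).2 \in rd_bag DG (arc_node e)).
Proof.
rewrite /arc_node; case: pickP => [i -> //|none].
by have [i ei] := rd_cover_arcs DG (valP e); move: (none i); rewrite ei.
Qed.

Definition subst_node : finType := (rd_node DG + (arcsT G * rd_node DF))%type.

Definition subst_root : subst_node := inl (rd_root DG).

Definition subst_parent (x : subst_node) : subst_node :=
  match x with
  | inl i => inl (rd_parent DG i)
  | inr (e, y) => if y == rd_root DF then inl (arc_node e) else inr (e, rd_parent DF y)
  end.

Definition subst_depth (x : subst_node) : nat :=
  match x with
  | inl i => rd_depth DG i
  | inr (_, y) => \max_i rd_depth DG i + (rd_depth DF y).+1
  end.

Definition subst_bag (x : subst_node) : {set vert (subst G F)} :=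
  match x with
  | inl i => inl @: rd_bag DG i
  | inr (e, y) => emb e @: rd_bag DF y
  end.

Lemma subst_parent_root : subst_parent subst_root = subst_root.
Proof. by rewrite /= rd_parent_root. Qed.

Lemma subst_depth_parent x :
  x != subst_root -> subst_depth (subst_parent x) < subst_depth x.
Proof.
case: x => [i|[e y]] /=; first by move=> ir; apply: rd_depth_parent; apply: contra ir => /eqP->.
move=> _; case: ifP => [_|yr] /=; last by rewrite ltn_add2l ltnS rd_depth_parent ?yr.
by rewrite addnS ltnS (leq_trans (leq_bigmax _)) ?leq_addr.
Qed.

Lemma subst_cover_vertices w : exists x, w \in subst_bag x.
Proof.
case: w => [a|[e z]].
  by have [i ai] := rd_cover_vertices DG a; exists (inl i); apply: imset_f.
have [y zy] := rd_cover_vertices DF (val z).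
by exists (inr (e, y)); rewrite /= -emb_val imset_f.
Qed.

Lemma subst_cover_arcs (w1 w2 : vert (subst G F)) :
  arc w1 w2 -> exists x, (w1 \in subst_bag x) && (w2 \in subst_bag x).
Proof.
case/existsP=> e /existsP[x1 /existsP[x2 /and3P[x12 /eqP<- /eqP<-]]].
have [y /andP[x1y x2y]] := rd_cover_arcs DF x12.
by exists (inr (e, y)); rewrite !imset_f.
Qed.

Lemma top_bag_subst_inl w i : top_bag subst_parent subst_root subst_bag w (inl i) ->
  exists2 a, w = inl a & rd_top_bag DG a i.
Proof.
case/andP=> /imsetP[a ai ->] top; exists a => //; rewrite /top_bag ai /=.
case/orP: top => [/eqP[->]|top]; first by rewrite eqxx.
by apply/orP; right; apply: contra top; apply: imset_f.
Qed.

Lemma top_bag_subst_inr w e y : top_bag subst_parent subst_root subst_bag w (inr (e, y)) ->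
  exists2 z, w = inr (e, z) & rd_top_bag DF (val z) y.
Proof.
case/andP=> /imsetP[x xy ->] /=.
have [src_root snk_root] := andP (rd_terminals DF).
have [src_arc snk_arc] := andP (arc_node_bag e).
have [[xs ex]|[xs ex]|[z xz ex]] := emb_cases e x; last first.
  move=> top; exists z => //; rewrite /top_bag -xz xy /=.
  move: top; rewrite ex; case: ifP => //= _; apply: contra => ?.
  by rewrite -emb_val -xz imset_f.
all: case: ifP => [_|yr] /=; first by rewrite ex imset_f.
all: by rewrite imset_f // root_bag_parent ?(negbT yr) // xs.
Qed.

Lemma subst_top_bag_unique w x1 x2 :
  top_bag subst_parent subst_root subst_bag w x1 ->
  top_bag subst_parent subst_root subst_bag w x2 -> x1 = x2.
Proof.
case: x1 x2 => [i1|[e1 y1]] [i2|[e2 y2]].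
- move=> /top_bag_subst_inl[a1 -> t1] /top_bag_subst_inl[a2 [<-] t2].
  by rewrite (rd_top_bag_unique t1 t2).
- by move=> /top_bag_subst_inl[a1 -> _] /top_bag_subst_inr[z2].
- by move=> /top_bag_subst_inr[z1 -> _] /top_bag_subst_inl[a2].
- move=> /top_bag_subst_inr[z1 -> t1] /top_bag_subst_inr[z2 [<- <-] t2].
  by rewrite (rd_top_bag_unique t1 t2).
Qed.

Lemma subst_terminals :
  (src (subst G F) \in subst_bag subst_root) && (snk (subst G F) \in subst_bag subst_root).
Proof. by have [s_root t_root] := andP (rd_terminals DG); rewrite !imset_f. Qed.

Lemma subst_bag_size x : #|subst_bag x| <= k.
Proof. by case: x => [i|[e y]]; apply: leq_trans (leq_imset_card _ _) (rd_bag_size _). Qed.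

Definition subst_decomposition : rooted_decomposition (subst G F) k :=
  RootedDecomposition subst_parent_root subst_depth_parent subst_cover_vertices
    subst_cover_arcs subst_top_bag_unique subst_terminals subst_bag_size.

End Substitution.

Section BaseGraph.
Variable n : nat.

Definition H1_node : finType := option ('I_n * option ('I_n * bool)).

Definition H1_parent (x : H1_node) : H1_node :=
  match x with Some (j, Some (_, false)) => Some (j, None) | _ => None end.

Definition H1_depth (x : H1_node) : nat :=
  match x with
  | None => 0
  | Some (_, Some (_, false)) => 2
  | Some _ => 1
  end.

Definition is_left (v : V1 n) : bool :=
  if v is inl (inr (_, b)) then b else false.

Definition H1_bag (x : H1_node) : {set V1 n} :=
  match x with
  | None => [set v | (v == vs n) || (v == vt n) || is_left v]
  | Some (j, None) => [set v | (v == vr j) || (v == vt n) || is_left v]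
  | Some (j, Some (q, b)) => [set v | [exists m : 'I_n.+1, onP b j q m v]]
  end.

Definition H1_top_node (v : V1 n) : H1_node :=
  match v with
  | inl (inr (j, false)) => Some (j, None)
  | inr (x, b) => Some ((val x).1.1, Some ((val x).1.2, b))
  | _ => None
  end.

Lemma H1_parent_root : H1_parent None = None.
Proof. by []. Qed.

Lemma H1_depth_parent x : x != None -> H1_depth (H1_parent x) < H1_depth x.
Proof. by case: x => [[j [[q []]|]]|]. Qed.

Lemma H1_cover_vertices v : exists x, v \in H1_bag x.
Proof.
case: v => [[s|[j []]]|[[[[j q] m] m_gt0] b]].
- by exists None; rewrite inE; case: s; rewrite eqxx ?orbT.
- by exists None; rewrite inE orbT.
- by exists (Some (j, None)); rewrite inE eqxx.
exists (Some (j, Some (q, b))); rewrite inE; apply/existsP.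
exists (widen_ord (leqnSn n) m); rewrite /onP /=.
by rewrite eqn0Ngt m_gt0 (ltn_eqF (ltn_ord m)) !eqxx.
Qed.

Lemma H1_cover_arcs (u v : V1 n) :
  arc1 u v -> exists x, (u \in H1_bag x) && (v \in H1_bag x).
Proof.
case/orP=> [/existsP[j /existsP[q /existsP[m /orP[]/andP[um vm]]]]|].
- exists (Some (j, Some (q, true))); rewrite !inE; apply/andP; split; apply/existsP.
    by exists (inord m); rewrite inordK // ltnW // ltnS.
  by exists (inord m.+1); rewrite inordK // ltnS.
- exists (Some (j, Some (q, false))); rewrite !inE; apply/andP; split; apply/existsP.
    by exists (inord m); rewrite inordK // ltnW // ltnS.
  by exists (inord m.+1); rewrite inordK // ltnS.
case/existsP=> j /existsP[k /andP[/eqP-> /eqP->]].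
by exists (Some (k, None)); rewrite !inE eqxx orbT.
Qed.

Lemma H1_top_bag_node v x : top_bag H1_parent None H1_bag v x -> x = H1_top_node v.
Proof.
rewrite /top_bag; case: x => [[j [[q b]|]]|] /=; rewrite !inE.
- case/andP=> /existsP[m]; rewrite /onP.
  case: ifP => _; first by move/eqP->; case: b; rewrite /= !inE eqxx.
  case: ifP => _; first by move/eqP->; case: b; rewrite /= !inE ?eqxx ?orbT.
  by case: v => // -[x b'] /and4P[/eqP-> /eqP <- /eqP <- _].
- case: v => [[[]|[r []]]|[x b]] //=; rewrite ?andbF ?andbT ?orbF //.
  by move=> /eqP[/= ->].
- by case: v => [[[]|[r []]]|[x b]].
Qed.

Lemma H1_top_bag_unique v x1 x2 :
  top_bag H1_parent None H1_bag v x1 -> top_bag H1_parent None H1_bag v x2 -> x1 = x2.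
Proof. by move=> /H1_top_bag_node-> /H1_top_bag_node->. Qed.

Lemma H1_terminals : (vs n \in H1_bag None) && (vt n \in H1_bag None).
Proof. by rewrite !inE !eqxx orbT. Qed.

Lemma onP_functional b (j q : 'I_n) m (v w : V1 n) :
  onP b j q m v -> onP b j q m w -> v = w.
Proof.
rewrite /onP; case: ifP => _; first by move=> /eqP-> /eqP->.
case: ifP => _; first by move=> /eqP-> /eqP->.
case: v w => [//|[[[[j1 q1] m1] p1] b1]] [//|[[[[j2 q2] m2] p2] b2]] /=.
move=> /and4P[/eqP-> /eqP-> /eqP-> /eqP e1] /and4P[/eqP-> /eqP-> /eqP-> /eqP e2].
have m12 : m1 = m2 by apply: val_inj; rewrite /= e1 e2.
by subst m2; rewrite (bool_irrelevance p1 p2).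
Qed.

Lemma card_path_bag b (j q : 'I_n) :
  #|[set v | [exists m : 'I_n.+1, onP b j q m v]]| <= n.+1.
Proof.
pose at_pos (m : 'I_n.+1) := odflt (vs n) [pick v | onP b j q m v].
apply: leq_trans (subset_leq_card (_ : _ \subset at_pos @: 'I_n.+1)) _.
  apply/subsetP=> v; rewrite inE => /existsP[m vm]; apply/imsetP; exists m => //.
  by rewrite /at_pos; case: pickP => [w /(onP_functional vm)|/(_ v)] //; rewrite vm.
by rewrite (leq_trans (leq_imset_card _ _)) // card_ord.
Qed.

Lemma card_hub_bag (a c : V1 n) : #|[set v | (v == a) || (v == c) || is_left v]| <= n.+2.
Proof.
apply: leq_trans (subset_leq_card (_ : _ \subset a |: (c |: [set vl j | j : 'I_n]))) _.
  apply/subsetP=> v; rewrite !inE -orbA => /or3P[->|->|] //; rewrite ?orbT //.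
  by case: v => [[//|[j []]]|] // _; rewrite imset_f ?orbT.
rewrite !cardsU1 -[n.+2]/(1 + (1 + n)); do 2 apply: leq_add (leq_b1 _) _.
by rewrite (leq_trans (leq_imset_card _ _)) ?card_ord.
Qed.

Lemma H1_bag_size x : #|H1_bag x| <= n.+2.
Proof.
by case: x => [[j [[q b]|]]|]; rewrite /= ?card_hub_bag //; apply/ltnW/card_path_bag.
Qed.

Definition H1_decomposition : rooted_decomposition (H1 n) n.+2 :=
  @RootedDecomposition (H1 n) n.+2 _ _ _ _ _ H1_parent_root H1_depth_parent
    H1_cover_vertices H1_cover_arcs H1_top_bag_unique H1_terminals H1_bag_size.

End BaseGraph.

Fixpoint Hgr_decomposition (n k : nat) : rooted_decomposition (Hgr n k) n.+2 :=
  if k is k'.+1 then subst_decomposition (H1_decomposition n) (Hgr_decomposition n k')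
  else H1_decomposition n.

Theorem lemma2 (n i : nat) : 1 <= n -> 1 <= i ->
  treewidth_le (@adj (H n i)) (n + 1).
Proof.
by move=> _ _; rewrite addn1; apply: treewidth_le_rooted (Hgr_decomposition n i.-1).
Qed.
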